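(* Let $k$ be a positive integer, let $G$ be a multigraph and let $A\subseteq V(G)$ be nonempty. Then there is a set $X\subseteq E(G)$ with $|X|\le (|A|-1)(k-1)$ that $k$-perfectly separates $A$.
   Context: For vertices $u,v$ of a multigraph $H$, $u\sim_k v$ in $H$ means that either $u=v$ or there are $k$ pairwise edge-disjoint $u$--$v$-paths in $H$. $G-X$ denotes $G$ with the edges of $X$ deleted. An edge set $X$ $k$-perfectly separates $A$ if for all $a,a'\in A$ such that $a\not\sim_k a'$ in $G-X$, the vertices $a$ and $a'$ lie in different components of $G-X$. *)

From mathcomp Require Import all_boot.
Set Implicit Arguments. Unset Strict Implicit. Unset Printing Implicit Defensive.

(* A finite multigraph: vertex type V, edge type E, and an endpoint map
   [ends : E -> V * V] (parallel edges and loops allowed). *)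

Section Multigraph.
Variables (V E : finType) (ends : E -> V * V).

Definition joins (e : E) (x w : V) : bool :=
  (ends e == (x, w)) || (ends e == (w, x)).

(* A walk from x to v using only edges in F, given as a list of steps
   (edge, next vertex). *)
Fixpoint walk_in (F : {set E}) (x : V) (p : seq (E * V)) (v : V) : bool :=
  match p with
  | [::] => x == v
  | (e, w) :: p' => [&& e \in F, joins e x w & walk_in F w p' v]
  end.

Definition is_path (F : {set E}) (u v : V) (p : seq (E * V)) : bool :=
  walk_in F u p v && uniq (u :: map snd p).

Definition path_edges (p : seq (E * V)) : seq E := map fst p.

Definition simk (F : {set E}) (k : nat) (u v : V) : Prop :=
  u = v \/
  exists ps : 'I_k -> seq (E * V),
    (forall i, is_path F u v (ps i)) /\
    (forall i j, i != j -> [disjoint path_edges (ps i) & path_edges (ps j)]).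

Definition same_comp (F : {set E}) (u v : V) : Prop :=
  exists p, is_path F u v p.

Definition perfectly_separates (k : nat) (X : {set E}) (A : {set V}) : Prop :=
  forall a a', a \in A -> a' \in A ->
    ~ simk (~: X) k a a' -> ~ same_comp (~: X) a a'.

End Multigraph.

(* Induction on |A|.  If every two vertices of A in a common component of G are
   k-connected, X = {} works.  Otherwise some a, a' in A lie in a common component
   with a and a' not k-connected, and by Menger's theorem some vertex set S with
   a in S, a' not in S is left by a set C of fewer than k edges.  In G - C no edge
   leaves S, so apply induction to A ∩ S and A \ S in G - C, keep from the two
   resulting edge sets only the edges inside S, resp. outside S, and add C: the
   components of the resulting graph never cross S, and inside each side it agrees
   with the corresponding graph of the induction hypothesis.  The bound follows from
   |C| <= k - 1 and |A ∩ S| + |A \ S| = |A|.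

   Menger's theorem is proved with unit-capacity flows: as long as the residual
   graph has an a--a' path the flow is augmented, otherwise the vertices reachable
   from a give a cut whose size is at most the flow value, and a flow of value k
   decomposes into k edge-disjoint paths. *)

From mathcomp Require Import all_boot ssralg ssrnum ssrint.
From mathcomp Require Import zify.
From Stdlib Require Import Classical.
Set Implicit Arguments. Unset Strict Implicit. Unset Printing Implicit Defensive.
Import GRing.Theory Num.Theory.

Section Flows.
Variables (V E : finType) (ends : E -> V * V).

Definition etail (e : E) (d : bool) : V := if d then (ends e).1 else (ends e).2.
Definition ehead (e : E) (d : bool) : V := if d then (ends e).2 else (ends e).1.

Lemma etailN e d : etail e (~~ d) = ehead e d. Proof. by case: d. Qed.
Lemma eheadN e d : ehead e (~~ d) = etail e d. Proof. by case: d. Qed.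

Lemma etail_endpoint e d d' x :
  etail e d = x -> (etail e d' == x) || (ehead e d' == x).
Proof. by rewrite /etail /ehead; case: d; case: d' => <-; rewrite eqxx ?orbT. Qed.

Lemma joins_etail_ehead e d : joins ends e (etail e d) (ehead e d).
Proof.
by rewrite /joins /etail /ehead; case: d; case: (ends e) => a b /=; rewrite eqxx ?orbT.
Qed.

Local Open Scope ring_scope.

(* A unit-capacity flow is a partial orientation [o]: an edge [e] with
   [o e = Some d] carries one unit from [etail e d] to [ehead e d]. *)
Definition edge_outflow (oe : option bool) (e : E) (x : V) : int :=
  if oe is Some d then Posz (etail e d == x) - Posz (ehead e d == x) else 0.

Definition outflow (o : E -> option bool) (x : V) : int :=
  \sum_(e : E) edge_outflow (o e) e x.

Definition oriented_within (F : {set E}) (o : E -> option bool) :=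
  forall e, o e != None -> e \in F.

Definition flow (F : {set E}) o (k : nat) u v :=
  [/\ oriented_within F o, outflow o u = Posz k, outflow o v = - Posz k &
     forall x, x != u -> x != v -> outflow o x = 0].

Lemma flow0 F u v : flow F (fun=> None) 0 u v.
Proof. by split=> // [||x _ _]; rewrite /outflow big1. Qed.

Lemma flow_succ F o o' k u v : u != v -> flow F o k u v -> oriented_within F o' ->
  (forall z, outflow o' z = outflow o z + Posz (u == z) - Posz (v == z)) ->
  flow F o' k.+1 u v.
Proof.
move=> uv [_ Hu Hv Hx] Wo' Ho'; split=> // [||x xu xv]; rewrite Ho'.
- by rewrite Hu eqxx eq_sym (negbTE uv); lia.
- by rewrite Hv eqxx (negbTE uv); lia.
- by rewrite Hx // eq_sym (negbTE xu) eq_sym (negbTE xv); lia.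
Qed.

Lemma flow_pred F o o' k u v : u != v -> flow F o k.+1 u v -> oriented_within F o' ->
  (forall z, outflow o' z = outflow o z - Posz (u == z) + Posz (v == z)) ->
  flow F o' k u v.
Proof.
move=> uv [_ Hu Hv Hx] Wo' Ho'; split=> // [||x xu xv]; rewrite Ho'.
- by rewrite Hu eqxx eq_sym (negbTE uv); lia.
- by rewrite Hv eqxx (negbTE uv); lia.
- by rewrite Hx // eq_sym (negbTE xu) eq_sym (negbTE xv); lia.
Qed.

Definition reorient (o : E -> option bool) e oe : E -> option bool :=
  fun e' => if e' == e then oe else o e'.

Lemma outflow_reorient o e oe z :
  outflow (reorient o e oe) z =
    outflow o z - edge_outflow (o e) e z + edge_outflow oe e z.
Proof.
rewrite /outflow (bigD1 e) // [in RHS](bigD1 e) //= /reorient eqxx.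
rewrite (eq_bigr (fun i => edge_outflow (o i) i z)) => [|i /negbTE -> //].
by lia.
Qed.

Definition arc_rel (ok : E -> option bool -> bool -> bool) o : rel V :=
  fun a b => [exists e, exists d, [&& etail e d == a, ehead e d == b & ok e (o e) d]].

Lemma path_arc_rel_reorient ok o e d oe x y p : etail e d = x -> x \notin y :: p ->
  path (arc_rel ok o) y p -> path (arc_rel ok (reorient o e oe)) y p.
Proof.
move=> Hx xp; apply: (@sub_in_path _ (mem (y :: p))); last by apply/allP.
move=> a b Ha Hb /existsP[e' /existsP[d' /and3P[/eqP Ha' /eqP Hb' ok']]].
apply/existsP; exists e'; apply/existsP; exists d'; rewrite Ha' Hb' !eqxx /=.
case: (eqVneq e' e) => [Ee|ne]; last by rewrite /reorient (negbTE ne).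
subst e'; have := etail_endpoint d' Hx; rewrite Ha' Hb' => /orP[] /eqP Hxa;
  by move: xp; rewrite -Hxa ?Ha ?Hb.
Qed.

Definition residual (F : {set E}) o : rel V :=
  arc_rel (fun e oe d => ((oe == None) && (e \in F)) || (oe == Some (~~ d))) o.

(* Only pushed along residual arcs, where [o e] is [None] or [Some (~~ d)]. *)
Definition push o e d := reorient o e (if o e is None then Some d else None).

Lemma outflow_push (F : {set E}) o e d z :
  ((o e == None) && (e \in F)) || (o e == Some (~~ d)) ->
  outflow (push o e d) z =
    outflow o z + Posz (etail e d == z) - Posz (ehead e d == z).
Proof.
rewrite outflow_reorient /edge_outflow.
case: (o e) => [d'|] /= => [/eqP[->]|_]; rewrite ?etailN ?eheadN; lia.
Qed.

Lemma augment F o x p : path (residual F o) x p -> uniq (x :: p) ->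
  oriented_within F o ->
  exists o', oriented_within F o' /\
    forall z, outflow o' z = outflow o z + Posz (x == z) - Posz (last x p == z).
Proof.
elim: p o x => [|y p IH] o x /=.
  by move=> _ _ Wo; exists o; split => // z; lia.
case/andP=> /existsP[e /existsP[d /and3P[/eqP Hx /eqP Hy res]]] Hp.
case/andP=> xp Hu Wo.
have Wpush : oriented_within F (push o e d).
  move=> e'; rewrite /push /reorient; case: (eqVneq e' e) => [->|_]; last exact: Wo.
  by case: (o e) res => [d0|] //= /andP[].
have [o' [Wo' Ho']] := IH _ _ (path_arc_rel_reorient _ Hx xp Hp) Hu Wpush.
by exists o'; split => // z; rewrite Ho' (outflow_push z res) Hx Hy; lia.
Qed.


Definition crossing (F : {set E}) (S : {set V}) :=
  [set e in F | ((ends e).1 \in S) != ((ends e).2 \in S)].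

Definition edge_outflow_set o (R : {set V}) e : int :=
  if o e is Some d then Posz (etail e d \in R) - Posz (ehead e d \in R) else 0.

Lemma sum_eq_indicator (R : {set V}) a : \sum_(x in R) Posz (a == x) = Posz (a \in R).
Proof.
case: (boolP (a \in R)) => aR; last first.
  by rewrite big1 // => x xR; apply/eqP; rewrite eqz_nat eqb0; apply: contraNneq aR => ->.
rewrite (bigD1 a) //= eqxx big1 ?addr0 // => x /andP[_ xa].
by rewrite eq_sym (negbTE xa).
Qed.

Lemma sum_outflow o (R : {set V}) :
  \sum_(x in R) outflow o x = \sum_e edge_outflow_set o R e.
Proof.
rewrite /outflow exchange_big /=; apply: eq_bigr => e _.
rewrite /edge_outflow_set /edge_outflow; case: (o e) => [d|]; last by rewrite big1.
by rewrite sumrB !sum_eq_indicator.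
Qed.

Lemma flow_outflow_set F o k u v (R : {set V}) : flow F o k u v ->
  u \in R -> v \notin R -> \sum_e edge_outflow_set o R e = Posz k.
Proof.
case=> _ Hu _ Hx uR vR; rewrite -sum_outflow (bigD1 u) //= big1 ?addr0 //.
by move=> x /andP[xR xu]; apply: Hx => //; apply: contraNneq vR => <-.
Qed.

Lemma crossing_le_edge_outflow_set F o (R : {set V}) e :
  (forall a b, residual F o a b -> a \in R -> b \in R) ->
  Posz (e \in crossing F R) <= edge_outflow_set o R e.
Proof.
move=> closedR; have step d a b : etail e d = a -> ehead e d = b ->
    ((o e == None) && (e \in F)) || (o e == Some (~~ d)) -> a \in R -> b \in R.
  move=> Ha Hb ok; apply: closedR; apply/existsP; exists e; apply/existsP; exists d.
  by rewrite Ha Hb !eqxx.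
rewrite /edge_outflow_set inE; case He: (o e) => [d|].
  have hd_tl : ehead e d \in R -> etail e d \in R.
    by apply: step (etailN e d) (eheadN e d) _; rewrite He negbK eqxx orbT.
  rewrite /etail /ehead in hd_tl *; case: d {He} hd_tl;
    case: (_ \in R); case: (_ \in R); case: (e \in F) => //= /(_ isT) //.
case eF: (e \in F) => //=.
have := step true _ _ erefl erefl; have := step false _ _ erefl erefl.
rewrite He eF /etail /ehead /= => /(_ isT) s21 /(_ isT) s12.
have -> : ((ends e).1 \in R) = ((ends e).2 \in R) by apply/idP/idP.
by rewrite eqxx.
Qed.

Lemma residual_cut_bound F o k u v : flow F o k u v ->
  v \notin [set y | connect (residual F o) u y] ->
  (#|crossing F [set y | connect (residual F o) u y]| <= k)%N.
Proof.
move=> fl vR; set R := [set y | connect (residual F o) u y].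
have uR : u \in R by rewrite inE connect0.
have closedR a b : residual F o a b -> a \in R -> b \in R.
  by rewrite !inE => ab ua; apply: connect_trans ua (connect1 ab).
rewrite -lez_nat -(flow_outflow_set fl uR vR) -sum1_card big_mkcond /=.
rewrite (big_morph Posz PoszD (erefl (Posz 0))); apply: ler_sum => e _.
by have := crossing_le_edge_outflow_set e closedR; case: (e \in crossing F R).
Qed.

Definition oriented o : rel V := arc_rel (fun _ oe d => oe == Some d) o.

Lemma flow_oriented_path F o k u v : flow F o k.+1 u v ->
  connect (oriented o) u v.
Proof.
move=> fl; apply: contraT => nc; set R := [set y | connect (oriented o) u y].
have uR : u \in R by rewrite inE connect0.
have vR : v \notin R by rewrite inE.
suff : \sum_e edge_outflow_set o R e <= 0 by rewrite (flow_outflow_set fl uR vR).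
apply: sumr_le0 => e _; rewrite /edge_outflow_set; case He: (o e) => [d|] //.
have : etail e d \in R -> ehead e d \in R.
  rewrite !inE => ut; apply: connect_trans ut (connect1 _).
  by apply/existsP; exists e; apply/existsP; exists d; rewrite He !eqxx.
by case: (etail e d \in R); case: (ehead e d \in R) => //= /(_ isT).
Qed.

Lemma strip_path F o x p : path (oriented o) x p -> uniq (x :: p) ->
  oriented_within F o ->
  exists q o', [/\ walk_in ends F x q (last x p), map snd q = p,
    forall e, e \in path_edges q -> o e != None /\ o' e = None,
    forall e, o' e != None -> o e != None &
    forall z, outflow o' z = outflow o z - Posz (x == z) + Posz (last x p == z)].
Proof.
elim: p o x => [|y p IH] o x /=.
  by move=> _ _ _; exists [::], o; split=> // [|z]; [exact: eqxx | lia].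
case/andP=> /existsP[e /existsP[d /and3P[/eqP Hx /eqP Hy /eqP He]]] Hp.
case/andP=> xp Hu Wo; set o1 := reorient o e None.
have Wo1 : oriented_within F o1.
  by move=> e'; rewrite /o1 /reorient; case: (e' == e) => //; apply: Wo.
have [q [o' [Hw Hm Hq Ho' Hn]]] :=
  IH _ _ (path_arc_rel_reorient _ Hx xp Hp) Hu Wo1.
have o1_le e' : o1 e' != None -> o e' != None by rewrite /o1 /reorient; case: (e' == e).
exists ((e, y) :: q), o'; split => //=.
- by rewrite Hw andbT Wo ?He // -Hx -Hy joins_etail_ehead.
- by rewrite Hm.
- move=> e0; rewrite inE => /orP[/eqP ->|/Hq[/o1_le]//].
  split; first by rewrite He.
  by apply/eqP; apply: contraT => /Ho'; rewrite /o1 /reorient eqxx.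
- by move=> e0 /Ho' /o1_le.
- by move=> z; rewrite Hn outflow_reorient He /= Hx Hy; lia.
Qed.

Lemma flow_decomposition F u v k o : u != v -> flow F o k u v ->
  exists ps : 'I_k -> seq (E * V),
    [/\ forall i, is_path ends F u v (ps i),
        forall i j, i != j -> [disjoint path_edges (ps i) & path_edges (ps j)] &
        forall i e, e \in path_edges (ps i) -> o e != None].
Proof.
move=> uv; elim: k o => [|k IH] o fl; first by exists (fun _ => [::]); split; case.
have /connectP[p Hp Hl] := flow_oriented_path fl.
case: (shortenP Hp) Hl => p' Hp' Hu' _ Hl.
have [Wo _ _ _] := fl.
have [q [o' [Hw Hm Hq Ho' Hn]]] := strip_path Hp' Hu' Wo.
rewrite -Hl in Hw Hn.
have [ps' [P1 P2 P3]] := IH _ (flow_pred uv fl (fun e => Wo e \o Ho' e) Hn).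
have disj_q i : [disjoint path_edges q & path_edges (ps' i)].
  rewrite disjoint_has; apply/hasPn => e /Hq[_ o'e]; apply/negP => /P3.
  by rewrite o'e.
exists (fun i => if unlift ord_max i is Some j then ps' j else q); split.
- move=> i; case: (unliftP ord_max i) => [j _|_]; first exact: P1.
  by rewrite /is_path Hw Hm.
- move=> i j; case: (unliftP ord_max i) => [a ->|->];
    case: (unliftP ord_max j) => [b ->|->].
  + by rewrite (inj_eq (@lift_inj _ ord_max)); apply: P2.
  + by move=> _; rewrite disjoint_sym; apply: disj_q.
  + by move=> _; apply: disj_q.
  + by rewrite eqxx.
- move=> i e; case: (unliftP ord_max i) => [j _|_]; first by move/P3/Ho'.
  by move/Hq => [].
Qed.

Lemma menger_flow F u v k : u != v ->
  (exists o, flow F o k u v) \/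
  exists S : {set V}, [/\ u \in S, v \notin S & (#|crossing F S| < k)%N].
Proof.
move=> uv; elim: k => [|k [[o fl]|[S [uS vS cS]]]].
- by left; exists (fun=> None); exact: flow0.
- have [Wo _ _ _] := fl.
  case: (boolP (connect (residual F o) u v)) => [/connectP[p Hp Hl]|nc].
    case: (shortenP Hp) Hl => p' Hp' Hu' _ Hl.
    have [o' [Wo' Ho']] := augment Hp' Hu' Wo; rewrite -Hl in Ho'.
    by left; exists o'; exact: flow_succ uv fl Wo' Ho'.
  right; exists [set y | connect (residual F o) u y]; split.
  + by rewrite inE connect0.
  + by rewrite inE.
  + by rewrite ltnS; apply: (residual_cut_bound fl); rewrite inE.
- by right; exists S; split => //; apply: ltnW.
Qed.

Lemma menger F u v k : u != v ->
  simk ends F k u v \/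
  exists S : {set V}, [/\ u \in S, v \notin S & (#|crossing F S| < k)%N].
Proof.
move=> uv; case: (menger_flow F k uv) => [[o fl]|]; last by right.
by have [ps [P1 P2 _]] := flow_decomposition uv fl; left; right; exists ps.
Qed.

End Flows.

Section Separation.
Variables (V E : finType) (ends : E -> V * V).

Definition perfect (H : {set E}) k (A : {set V}) :=
  forall a a', a \in A -> a' \in A ->
    ~ simk ends H k a a' -> ~ same_comp ends H a a'.

Definition edge_closed (G : {set E}) (S : {set V}) :=
  forall e, e \in G -> ((ends e).1 \in S) = ((ends e).2 \in S).

Definition inner_edges (S : {set V}) :=
  [set e | ((ends e).1 \in S) && ((ends e).2 \in S)].

Lemma edge_closedS (G G' : {set E}) S :
  G \subset G' -> edge_closed G' S -> edge_closed G S.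
Proof. by move=> /subsetP sGG' clS e /sGG' /clS. Qed.

Lemma edge_closedC (G : {set E}) S : edge_closed G S -> edge_closed G (~: S).
Proof. by move=> clS e /clS; rewrite !inE => ->. Qed.

Lemma edge_closed_crossing (F : {set E}) S : edge_closed (F :\: crossing ends F S) S.
Proof. by move=> e; rewrite !inE negb_and negbK => /andP[/orP[/negbTE->|/eqP]]. Qed.

Lemma walk_in_subset (G G' : {set E}) x p y : G \subset G' ->
  walk_in ends G x p y -> walk_in ends G' x p y.
Proof.
move=> /subsetP sGG'; elim: p x => [|[e w] p IH] x //=.
by case/and3P => /sGG' -> -> /IH.
Qed.

Lemma joins_edge_closed (G : {set E}) S e x w : edge_closed G S -> e \in G ->
  joins ends e x w -> (w \in S) = (x \in S) /\ (e \in inner_edges S) = (x \in S).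
Proof.
move=> clS /clS; rewrite /joins inE.
by case: (ends e) => a b /= ab /orP[] /eqP[<- <-]; rewrite ab andbb.
Qed.

Lemma walk_in_edge_closed (G : {set E}) S x p y : edge_closed G S -> x \in S ->
  walk_in ends G x p y -> walk_in ends (G :&: inner_edges S) x p y /\ y \in S.
Proof.
move=> clS; elim: p x => [|[e w] p IH] x /=; first by move=> xS /eqP <-.
move=> xS /and3P[eG exw Hw]; have [wx ex] := joins_edge_closed clS eG exw.
have [IH1 IH2] := IH w (etrans wx xS) Hw.
by rewrite inE eG ex xS exw IH1 IH2.
Qed.

Section Transfer.
Variables (G H : {set E}) (S : {set V}).
Hypotheses (clG : edge_closed G S) (GH : G :&: inner_edges S \subset H).

Lemma walk_in_transfer x p y : x \in S -> walk_in ends G x p y -> walk_in ends H x p y.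
Proof. by move=> xS /(walk_in_edge_closed clG xS)[/(walk_in_subset GH)]. Qed.

Lemma simk_transfer k x y : x \in S -> simk ends G k x y -> simk ends H k x y.
Proof.
move=> xS [->|[ps [Pp Pd]]]; [by left | right; exists ps; split => // i].
by have /andP[W U] := Pp i; rewrite /is_path U (walk_in_transfer xS W).
Qed.

Lemma same_comp_transfer x y : x \in S -> same_comp ends G x y -> same_comp ends H x y.
Proof.
by move=> xS [p /andP[W U]]; exists p; rewrite /is_path U (walk_in_transfer xS W).
Qed.

End Transfer.

Lemma same_comp_edge_closed (G : {set E}) S x y : edge_closed G S -> x \in S ->
  same_comp ends G x y -> y \in S.
Proof. by move=> clS xS [p /andP[/(walk_in_edge_closed clS xS)[]]]. Qed.

Lemma perfect_transfer (G H : {set E}) S k A : edge_closed G S -> edge_closed H S ->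
  G :&: inner_edges S = H :&: inner_edges S ->
  perfect H k (A :&: S) -> perfect G k (A :&: S).
Proof.
move=> clG clH eqGH perfH a a' aAS a'AS nsim comp.
have aS : a \in S by case/setIP: aAS.
have GH : G :&: inner_edges S \subset H by rewrite eqGH subsetIl.
have HG : H :&: inner_edges S \subset G by rewrite -eqGH subsetIl.
apply: (perfH a a' aAS a'AS (contra_not (simk_transfer clH HG aS) nsim)).
exact: same_comp_transfer clG GH _ _ aS comp.
Qed.

Lemma perfect_split (G : {set E}) S k A : edge_closed G S ->
  perfect G k (A :&: S) -> perfect G k (A :&: ~: S) -> perfect G k A.
Proof.
move=> clS perfS perfC a a' aA a'A nsim comp.
case: (boolP (a \in S)) => [aS|aNS].
  have a'S := same_comp_edge_closed clS aS comp.
  by apply: (perfS a a') nsim comp; rewrite in_setI ?aA ?a'A.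
have aC : a \in ~: S by rewrite inE.
have a'C := same_comp_edge_closed (edge_closedC clS) aC comp.
by apply: (perfC a a') nsim comp; rewrite in_setI ?aA ?a'A.
Qed.

Definition glue (F : {set E}) S (X1 X2 : {set E}) :=
  crossing ends F S :|: (X1 :&: inner_edges S) :|: (X2 :&: inner_edges (~: S)).

Lemma crossingC (F : {set E}) S : crossing ends F (~: S) = crossing ends F S.
Proof. by apply/setP => e; rewrite !inE (inj_eq negb_inj). Qed.

Lemma glueC (F : {set E}) S X1 X2 : glue F (~: S) X2 X1 = glue F S X1 X2.
Proof. by rewrite /glue crossingC setCK -setUA [_ :|: (X1 :&: _)]setUC setUA. Qed.

Lemma card_glue (F : {set E}) S X1 X2 :
  #|glue F S X1 X2| <= #|crossing ends F S| + #|X1| + #|X2|.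
Proof.
rewrite /glue; apply: leq_trans (leq_card_setU _ _) _; apply: leq_add.
  by apply: leq_trans (leq_card_setU _ _) _; rewrite leq_add2l subset_leq_card ?subsetIl.
by rewrite subset_leq_card ?subsetIl.
Qed.

Lemma glue_inner_edges (F : {set E}) S X1 X2 :
  (F :\: glue F S X1 X2) :&: inner_edges S =
    (F :\: crossing ends F S :\: X1) :&: inner_edges S.
Proof.
apply/setP => e; rewrite !inE.
by case: (e \in F); case: (e \in X1); case: (e \in X2);
   case: ((ends e).1 \in S); case: ((ends e).2 \in S).
Qed.

Lemma edge_closed_glue (F : {set E}) S X1 X2 : edge_closed (F :\: glue F S X1 X2) S.
Proof.
apply: (edge_closedS _ (@edge_closed_crossing F S)).
by apply: setDS; rewrite /glue -setUA subsetUl.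
Qed.

Lemma perfect_glue (F : {set E}) S X1 X2 k A :
  perfect (F :\: crossing ends F S :\: X1) k (A :&: S) ->
  perfect (F :\: crossing ends F S :\: X2) k (A :&: ~: S) ->
  perfect (F :\: glue F S X1 X2) k A.
Proof.
have side S' Y1 Y2 : perfect (F :\: crossing ends F S' :\: Y1) k (A :&: S') ->
    perfect (F :\: glue F S' Y1 Y2) k (A :&: S').
  apply: perfect_transfer; [exact: edge_closed_glue | | exact: glue_inner_edges].
  exact: (edge_closedS (subsetDl _ _) (@edge_closed_crossing F S')).
move=> perf1 perf2.
apply: perfect_split (@edge_closed_glue F S X1 X2) (side _ _ _ perf1) _.
by rewrite -glueC; apply: side; rewrite crossingC.
Qed.

Lemma exists_perfect_separator k : 0 < k -> forall (F : {set E}) (A : {set V}),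
  A != set0 -> exists X : {set E},
    #|X| <= (#|A| - 1) * (k - 1) /\ perfect (F :\: X) k A.
Proof.
move=> k_gt0 F A; have [n] := ubnP #|A|; elim: n F A => // n IH F A ltAn nA.
have [[a [a' [aA a'A nsim comp]]]|perfA] := classic (exists a a',
  [/\ a \in A, a' \in A, ~ simk ends F k a a' & same_comp ends F a a']); last first.
  exists set0; rewrite cards0 setD0; split=> // a a' aA a'A nsim comp.
  by apply: perfA; exists a, a'.
have aa' : a != a' by apply/eqP => eq_aa'; apply: nsim; left.
have [//|[S [aS a'S cut_lt]]] := menger ends F k aa'.
have A1_gt0 : 0 < #|A :&: S| by apply/card_gt0P; exists a; rewrite inE aA aS.
have A2_gt0 : 0 < #|A :&: ~: S| by apply/card_gt0P; exists a'; rewrite !inE a'A a'S.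
have cardA : #|A :&: S| + #|A :&: ~: S| = #|A| by rewrite -setDE cardsID.
have [X1 [cX1 perf1]] := IH (F :\: crossing ends F S) (A :&: S)
  ltac:(lia) ltac:(by rewrite -card_gt0).
have [X2 [cX2 perf2]] := IH (F :\: crossing ends F S) (A :&: ~: S)
  ltac:(lia) ltac:(by rewrite -card_gt0).
exists (glue F S X1 X2); split; last exact: perfect_glue.
have -> : #|A| - 1 = (#|A :&: S| - 1) + (#|A :&: ~: S| - 1) + 1 by lia.
rewrite !mulnDl mul1n; have := card_glue F S X1 X2; lia.
Qed.

End Separation.

Theorem lemma11 (V E : finType) (ends : E -> V * V) (k : nat) (A : {set V}) :
  0 < k -> A != set0 ->
  exists X : {set E},
    #|X| <= (#|A| - 1) * (k - 1) /\ perfectly_separates ends k X A.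
Proof.
move=> k_gt0 nA; have [X [cX perfX]] := exists_perfect_separator ends k_gt0 setT nA.
by exists X; rewrite setTD in perfX.
Qed.
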